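(* Let $A\in\mathbb{R}^{n\times n}$ be symmetric. Let $V_N=[v_1,\ldots,v_N]\in\mathbb{R}^{n\times M}$, where each block vector $v_j$ has $n$ rows, and let $T_N\in\mathbb{R}^{M\times M}$ be a symmetric block tridiagonal matrix (with diagonal blocks $\alpha_j$, subdiagonal blocks $\beta_{j}$ and superdiagonal blocks $\beta_j^T$) such that the perturbed block Lanczos recurrence \[ AV_N=V_NT_N+\left[\Delta v_1,\ldots,\Delta v_{k-1},\Delta\widetilde v_k,\ldots,\Delta\widetilde v_N\right] \] holds (i.e. the recurrence terminates with $\beta_{N+1}=0$), where each perturbation block $\Delta v_j$, $\Delta \widetilde v_j$ has the same size as $v_j$, and \[ \max\left(\|\Delta v_1\|,\ldots,\|\Delta v_{k-1}\|,\|\Delta\widetilde v_k\|,\ldots,\|\Delta\widetilde v_N\|\right)\le\epsilon_2\|A\| \] for some $\epsilon_2>0$. Let $T_N=S_N\Theta_NS_N^T$ be a spectral decomposition with $S_N^TS_N=I$, $S_N=[s_1^{(N)},\ldots,s_M^{(N)}]$, $\Theta_N=\mathrm{diag}(\theta_1^{(N)},\ldots,\theta_M^{(N)})$, and define the Ritz vectors $z_i^{(N)}=V_Ns_i^{(N)}$. Suppose $\epsilon_1>0$ (independent of $i,j$) is such that for every Ritz pair $(\theta_i^{(N)},z_i^{(N)})$ with $\|z_i^{(N)}\|<0.5$ there exists a Ritz pair $(\theta_j^{(N)},z_j^{(N)})$ with \[ \|z_j^{(N)}\|\ge 0.5\quad\text{and}\quad|\theta_i^{(N)}-\theta_j^{(N)}|\le\epsilon_1\|A\|.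 \] Then each eigenvalue of $T_N$ lies within $3\max\left(\sqrt{N}\epsilon_2,\epsilon_1\right)\|A\|$ of an eigenvalue of $A$.
   Context: All norms are spectral (2-)norms. A ''block vector'' is an $n\times p_j$ matrix; $I_p$ and $0_p$ denote the $p\times p$ identity and zero matrices. *)

From HB Require Import structures.
From mathcomp Require Import all_boot all_order all_algebra.
From mathcomp Require Import boolp classical_sets reals.
Set Implicit Arguments. Unset Strict Implicit. Unset Printing Implicit Defensive.
Import Order.TTheory GRing.Theory Num.Theory.
Local Open Scope ring_scope.

Definition vnorm (R : realType) (n : nat) (x : 'cV[R]_n) : R :=
  Num.sqrt (\sum_(i < n) x i 0 ^+ 2).

Definition mxnorm (R : realType) (m n : nat) (A : 'M[R]_(m, n)) : R :=
  sup [set vnorm (A *m x) | x in [set x : 'cV[R]_n | vnorm x <= 1]]%classic.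

Definition block_tridiag (R : realType) (N : nat) (p : 'I_N -> nat)
  (T : 'M[R]_(\sum_(j < N) p j)) : Prop :=
  forall i j : 'I_N, (i.+1 < j)%N \/ (j.+1 < i)%N ->
    @submxblock R N N p p T i j = 0.

From HB Require Import structures.
From mathcomp Require Import all_boot all_order all_algebra.
From mathcomp Require Import boolp classical_sets reals.
From mathcomp Require Import ring lra complex.
Import Order.TTheory GRing.Theory Num.Theory.
Set Implicit Arguments. Unset Strict Implicit. Unset Printing Implicit Defensive.
Local Open Scope ring_scope.

(* Every eigenvalue of T is a Ritz value theta_i, and the Ritz vector z_i = V s_i
   has residual A z_i - theta_i z_i = E s_i.  The blocks of the unit vector s_i
   have norms summing to at most sqrt N, so |E s_i| <= sqrt N eps2 |A|.  For
   symmetric A, expanding z in an orthonormal eigenbasis shows that some eigenvalue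
   lambda satisfies |th - lambda| |z| <= |A z - th z|; thus a Ritz value whose Ritz
   vector has norm >= 1/2 is within 2 sqrt N eps2 |A| of an eigenvalue of A, and
   every other Ritz value is within eps1 |A| of such a Ritz value. *)

Section CauchySchwarz.
Variable R : realFieldType.

Lemma cauchy_schwarz_sum (I : finType) (a b : I -> R) :
  (\sum_i a i * b i) ^+ 2 <= (\sum_i a i ^+ 2) * (\sum_i b i ^+ 2).
Proof.
set D := \sum_i \sum_j (a i * b j - a j * b i) ^+ 2.
have D_ge0 : 0 <= D.
  by apply: sumr_ge0 => i _; apply: sumr_ge0 => j _; apply: sqr_ge0.
have prod_sum (f g : I -> R) : (\sum_i f i) * (\sum_j g j) = \sum_i \sum_j f i * g j.
  by rewrite mulr_suml; apply: eq_bigr => i _; rewrite mulr_sumr.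
have lagrange : D = \sum_i \sum_j a i ^+ 2 * b j ^+ 2 + \sum_i \sum_j a j ^+ 2 * b i ^+ 2
                     - 2 * \sum_i \sum_j (a i * b i) * (a j * b j).
  rewrite mulr_sumr -!big_split -sumrB /=; apply: eq_bigr => i _.
  by rewrite mulr_sumr -!big_split -sumrB /=; apply: eq_bigr => j _; ring.
have swap : \sum_i \sum_j a j ^+ 2 * b i ^+ 2 = \sum_i \sum_j a i ^+ 2 * b j ^+ 2.
  by rewrite exchange_big.
move: D_ge0; rewrite lagrange swap -!prod_sum -expr2; lra.
Qed.

End CauchySchwarz.

Section VectorNorm.
Variable R : realType.

Lemma vnorm_ge0 n (x : 'cV[R]_n) : 0 <= vnorm x.
Proof. exact: sqrtr_ge0. Qed.

Lemma vnorm_sqr n (x : 'cV[R]_n) : vnorm x ^+ 2 = \sum_i x i 0 ^+ 2.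
Proof. by rewrite sqr_sqrtr //; apply: sumr_ge0 => i _; apply: sqr_ge0. Qed.

Lemma vnorm_sqr_mx n (x : 'cV[R]_n) : vnorm x ^+ 2 = (x^T *m x) 0 0.
Proof. by rewrite vnorm_sqr mxE; apply: eq_bigr => i _; rewrite !mxE expr2. Qed.

Lemma vnorm0 n : vnorm (0 : 'cV[R]_n) = 0.
Proof. by rewrite /vnorm big1 ?sqrtr0 // => i _; rewrite mxE expr0n. Qed.

Lemma vnormZ n a (x : 'cV[R]_n) : vnorm (a *: x) = `|a| * vnorm x.
Proof.
rewrite /vnorm -sqrtr_sqr -sqrtrM ?sqr_ge0 // mulr_sumr.
by congr Num.sqrt; apply: eq_bigr => i _; rewrite mxE exprMn.
Qed.

Lemma vnorm_eq0 n (x : 'cV[R]_n) : (vnorm x == 0) = (x == 0).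
Proof.
apply/idP/eqP => [|->]; last by rewrite vnorm0.
rewrite -sqrf_eq0 vnorm_sqr psumr_eq0 => [/allP x0|i _]; last exact: sqr_ge0.
apply/matrixP => i j; rewrite ord1 mxE.
by have := x0 i (mem_index_enum i); rewrite sqrf_eq0 => /eqP.
Qed.

Lemma vnorm_entry_le n (x : 'cV[R]_n) i : `|x i 0| <= vnorm x.
Proof.
rewrite -sqrtr_sqr ler_sqrt; last by apply: sumr_ge0 => j _; apply: sqr_ge0.
by rewrite (bigD1 i) //= lerDl; apply: sumr_ge0 => j _; apply: sqr_ge0.
Qed.

Lemma vnormD n (x y : 'cV[R]_n) : vnorm (x + y) <= vnorm x + vnorm y.
Proof.
have dot_le : \sum_i x i 0 * y i 0 <= vnorm x * vnorm y.
  have [dot_lt0|dot_ge0] := ltrP (\sum_i x i 0 * y i 0) 0.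
    by apply: le_trans (ltW dot_lt0) _; rewrite mulr_ge0 ?vnorm_ge0.
  rewrite -(ler_pXn2r (_ : (0 < 2)%N)) ?nnegrE ?mulr_ge0 ?vnorm_ge0 //.
  by rewrite exprMn !vnorm_sqr; apply: cauchy_schwarz_sum.
rewrite -(ler_pXn2r (_ : (0 < 2)%N)) ?nnegrE ?addr_ge0 ?vnorm_ge0 //.
rewrite sqrrD !vnorm_sqr.
have -> : \sum_i (x + y) i 0 ^+ 2
          = \sum_i x i 0 ^+ 2 + \sum_i y i 0 ^+ 2 + 2 * \sum_i x i 0 * y i 0.
  by rewrite mulr_sumr -!big_split /=; apply: eq_bigr => i _; rewrite mxE; ring.
lra.
Qed.

Lemma vnorm_sum n (I : finType) (F : I -> 'cV[R]_n) :
  vnorm (\sum_i F i) <= \sum_i vnorm (F i).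
Proof.
apply: (big_ind2 (fun x y => vnorm x <= y)) => [|x1 y1 x2 y2 le1 le2|//].
  by rewrite vnorm0.
exact: le_trans (vnormD x1 x2) (lerD le1 le2).
Qed.

Lemma vnorm_sqr_mxcol N (p : 'I_N -> nat) (x : 'cV[R]_(\sum_(j < N) p j)) :
  vnorm x ^+ 2 = \sum_j vnorm (submxcol x j) ^+ 2.
Proof.
rewrite vnorm_sqr_mx -[x]submxcolK tr_mxcol mul_mxrow_mxcol summxE.
by apply: eq_bigr => j _; rewrite vnorm_sqr_mx !mxcolK.
Qed.

Lemma sum_vnorm_submxcol_le N (p : 'I_N -> nat) (x : 'cV[R]_(\sum_(j < N) p j)) :
  \sum_j vnorm (submxcol x j) <= Num.sqrt N%:R * vnorm x.
Proof.
have sum_ge0 : 0 <= \sum_j vnorm (submxcol x j).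
  by apply: sumr_ge0 => j _; apply: vnorm_ge0.
rewrite -(ler_pXn2r (_ : (0 < 2)%N)) ?nnegrE ?mulr_ge0 ?sqrtr_ge0 ?vnorm_ge0 //.
rewrite exprMn sqr_sqrtr ?ler0n // vnorm_sqr_mxcol.
have := cauchy_schwarz_sum (fun _ : 'I_N => 1) (fun j => vnorm (submxcol x j)).
by under eq_bigr do rewrite mul1r; rewrite sumr_const card_ord expr1n.
Qed.

End VectorNorm.

Section OperatorNorm.
Variable R : realType.

Lemma mulmx_sum_col m n (M : 'M[R]_(m, n)) (x : 'cV[R]_n) :
  M *m x = \sum_j x j 0 *: col j M.
Proof.
apply/matrixP => i k; rewrite ord1 !mxE summxE; apply: eq_bigr => j _.
by rewrite !mxE mulrC.
Qed.

Lemma mxnorm_has_ubound m n (M : 'M[R]_(m, n)) :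
  has_ubound [set vnorm (M *m x) | x in [set x : 'cV[R]_n | vnorm x <= 1]]%classic.
Proof.
exists (\sum_j vnorm (col j M)) => _ [x /= x_le1 <-].
rewrite mulmx_sum_col; apply: le_trans (vnorm_sum _) _.
apply: ler_sum => j _; rewrite vnormZ ler_piMl ?vnorm_ge0 //.
exact: le_trans (vnorm_entry_le _ _) x_le1.
Qed.

Lemma vnorm_mulmx_le_mxnorm m n (M : 'M[R]_(m, n)) x :
  vnorm x <= 1 -> vnorm (M *m x) <= mxnorm M.
Proof. by move=> x_le1; apply: (ub_le_sup (mxnorm_has_ubound M)); exists x. Qed.

Lemma mxnorm_ge0 m n (M : 'M[R]_(m, n)) : 0 <= mxnorm M.
Proof.
by have := @vnorm_mulmx_le_mxnorm _ _ M 0; rewrite mulmx0 !vnorm0; apply.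
Qed.

Lemma vnorm_mulmx_le m n (M : 'M[R]_(m, n)) x :
  vnorm (M *m x) <= mxnorm M * vnorm x.
Proof.
have [->|x_neq0] := eqVneq x 0; first by rewrite mulmx0 !vnorm0 mulr0.
have x_gt0 : 0 < vnorm x by rewrite lt_def vnorm_eq0 x_neq0 vnorm_ge0.
have := @vnorm_mulmx_le_mxnorm _ _ M ((vnorm x)^-1 *: x).
rewrite -scalemxAr !vnormZ ger0_norm ?invr_ge0 ?vnorm_ge0 // mulVf ?gt_eqF //.
by move=> /(_ (lexx 1)); rewrite mulrC ler_pdivrMr.
Qed.

Lemma vnorm_mul_blocks_le n N (p : 'I_N -> nat) (E : 'M[R]_(n, \sum_(j < N) p j))
    (x : 'cV[R]_(\sum_(j < N) p j)) c :
  0 <= c -> (forall j, mxnorm (submxrow E j) <= c) ->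
  vnorm (E *m x) <= Num.sqrt N%:R * c * vnorm x.
Proof.
move=> c_ge0 E_le.
rewrite -[E]submxrowK -{1}[x]submxcolK mul_mxrow_mxcol.
apply: le_trans (vnorm_sum _) _.
apply: le_trans (_ : _ <= \sum_j c * vnorm (submxcol x j)) _.
  apply: ler_sum => j _; apply: le_trans (vnorm_mulmx_le _ _) _.
  by apply: ler_wpM2r; [apply: vnorm_ge0 | apply: E_le].
rewrite -mulr_sumr [_ * c]mulrC -mulrA.
by apply: ler_wpM2l => //; apply: sum_vnorm_submxcol_le.
Qed.

End OperatorNorm.

Section SymmetricSpectrum.
Variable R : realType.
Local Open Scope complex_scope.
Local Open Scope sesquilinear_scope.
Local Notation C := R[i].
Local Notation cmx M := (map_mx (real_complex R) M).

Lemma vnorm_sqr_complex n (y : 'cV[R]_n) :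
  (vnorm y ^+ 2)%:C = ((cmx y)^t* *m cmx y) 0 0.
Proof.
rewrite vnorm_sqr rmorph_sum mxE; apply: eq_bigr => k _.
by rewrite !mxE conj_Creal ?complex_real // rmorphXn.
Qed.

Lemma mulmx_conjtr_unitary m n (Q : 'M[C]_(m, n)) (u : 'cV[C]_m) :
  Q \is unitarymx -> (Q^t* *m u)^t* *m (Q^t* *m u) = u^t* *m u.
Proof.
move=> /unitarymxP QQt.
by rewrite trmx_mul map_mxM trmxCK mulmxA -(mulmxA _ Q) QQt mulmx1.
Qed.

Lemma conjtr_mulmx_self n (u : 'cV[C]_n) : (u^t* *m u) 0 0 = \sum_k `|u k 0| ^+ 2.
Proof. by rewrite mxE; apply: eq_bigr => k _; rewrite !mxE normCKC. Qed.

(* Diagonalise B over R[i] as B = P^* diag(d) P with P unitary and d real; the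
   weights are rho_k = |(P z)_k|^2. *)
Lemma symmetric_spectral_weights n (B : 'M[R]_n) (z : 'cV[R]_n) : B^T = B ->
  exists e rho : 'I_n -> R,
    [/\ forall k, eigenvalue B (e k), forall k, 0 <= rho k,
        vnorm z ^+ 2 = \sum_k rho k &
        vnorm (B *m z) ^+ 2 = \sum_k e k ^+ 2 * rho k].
Proof.
move=> B_sym; pose Bc := cmx B; pose zc := cmx z.
have Bc_herm : Bc \is hermsymmx.
  apply: realsym_hermsym; last by apply/mxOverP => i j; rewrite mxE complex_real.
  by apply/is_hermitianmxP; rewrite expr0 scale1r map_mx_id // map_trmx B_sym.
have /orthomx_spectralP Bc_diag := hermitian_normalmx Bc_herm.
have d_real := hermitian_spectral_diag_real Bc_herm.
have P_unitary := spectral_unitarymx Bc; have P_unit := spectral_unit Bc.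
set P := spectralmx Bc in Bc_diag P_unitary P_unit.
set d := spectral_diag Bc in Bc_diag d_real.
rewrite invmx_unitary // in Bc_diag.
pose w := P *m zc.
have zcE : zc = P^t* *m w by rewrite mulmxA -invmx_unitary // mulVmx // mul1mx.
have BzcE : Bc *m zc = P^t* *m (diag_mx d *m w) by rewrite {1}Bc_diag -!mulmxA.
pose e k := complex.Re (d 0 k); pose rho k := complex.Re (`|w k 0| ^+ 2).
have dE k : d 0 k = (e k)%:C by rewrite RRe_real //; move/mxOverP: d_real; apply.
have rhoE k : `|w k 0| ^+ 2 = (rho k)%:C.
  by rewrite RRe_real // ger0_real // exprn_ge0.
exists e, rho; split.
- move=> k; suff : eigenvalue Bc (d 0 k).
    by rewrite dE -(eigenvalue_map (real_complex R)).
  apply/eigenvalueP; exists (row k P).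
    have PBc : P *m Bc = diag_mx d *m P.
      by rewrite Bc_diag !mulmxA (unitarymxP P_unitary) mul1mx.
    by rewrite -row_mul PBc row_mul row_diag_mx -scalemxAl -rowE.
  apply/negP => /eqP Pk0.
  have := row_mul k P (invmx P); rewrite Pk0 mul0mx mulmxV //.
  by move=> /rowP /(_ k); rewrite !mxE eqxx /= => /eqP; rewrite oner_eq0.
- by move=> k; rewrite -ler0c -rhoE exprn_ge0.
- apply: (@complexI R); rewrite vnorm_sqr_complex -/zc zcE.
  rewrite mulmx_conjtr_unitary // conjtr_mulmx_self rmorph_sum.
  by apply: eq_bigr => k _; apply: rhoE.
- apply: (@complexI R); rewrite vnorm_sqr_complex map_mxM -/Bc -/zc BzcE.
  rewrite mulmx_conjtr_unitary // conjtr_mulmx_self rmorph_sum.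
  apply: eq_bigr => k _; rewrite mul_diag_mx mxE dE normrM exprMn.
  by rewrite real_normK ?complex_real // rhoE rmorphM rmorphXn.
Qed.

End SymmetricSpectrum.

Section ResidualBound.
Variable R : realType.

Lemma symmetric_eigenvalue_norm_le n (B : 'M[R]_n) (z : 'cV[R]_n) :
  B^T = B -> z != 0 -> exists2 e, eigenvalue B e & `|e| * vnorm z <= vnorm (B *m z).
Proof.
case: n => [|n] in B z *; first by rewrite [z]flatmx0 eqxx.
move=> B_sym _; have [e [rho [e_eig rho_ge0 zE BzE]]] := symmetric_spectral_weights z B_sym.
have [k _ k_min] := @arg_minP _ _ _ ord0 xpredT (fun k => e k ^+ 2) isT.
exists (e k) => //.
rewrite -(ler_pXn2r (_ : (0 < 2)%N)) ?nnegrE ?mulr_ge0 ?vnorm_ge0 //.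
rewrite exprMn real_normK ?num_real // zE BzE mulr_sumr; apply: ler_sum => j _.
by apply: ler_wpM2r; [apply: rho_ge0 | apply: k_min].
Qed.

Lemma eigenvalue_subr_scalar n (A : 'M[R]_n) a b :
  eigenvalue (A - a%:M) b = eigenvalue A (b + a).
Proof. by rewrite /eigenvalue /eigenspace raddfD /= opprD addrA addrAC. Qed.

Lemma symmetric_residual_le n (A : 'M[R]_n) (z : 'cV[R]_n) th :
  A^T = A -> z != 0 ->
  exists2 lambda, eigenvalue A lambda & `|th - lambda| * vnorm z <= vnorm (A *m z - th *: z).
Proof.
move=> A_sym z_neq0.
have shift_sym : (A - th%:M)^T = A - th%:M by rewrite linearB /= tr_scalar_mx A_sym.
have [e e_eig e_le] := symmetric_eigenvalue_norm_le shift_sym z_neq0.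
exists (e + th); first by rewrite -eigenvalue_subr_scalar.
by rewrite opprD addrCA subrr addr0 normrN -mul_scalar_mx -mulmxBl.
Qed.

End ResidualBound.

Section RitzPairs.
Variable R : realType.

Lemma eigenvalue_orthogonal_diag m (S : 'M[R]_m) (d : 'rV[R]_m) th :
  S^T *m S = 1%:M -> eigenvalue (S *m diag_mx d *m S^T) th -> exists i, th = d 0 i.
Proof.
move=> StS /eigenvalueP [v v_eig v_neq0].
have S_unit : S \in unitmx by case: (mulmx1_unit StS).
pose u := v *m S.
have u_eig : u *m diag_mx d = th *: u.
  by rewrite scalemxAl -v_eig !mulmxA -(mulmxA _ _ S) StS mulmx1.
have [i ui_neq0] : exists i, u 0 i != 0.
  apply/existsP; apply: contraNT v_neq0 => /existsPn u0.
  rewrite -(mulmxK S_unit v) (_ : v *m S = 0) ?mul0mx //.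
  by apply/rowP => i; rewrite [RHS]mxE; apply/eqP/negbNE/u0.
clearbody u; exists i; move/rowP: u_eig => /(_ i); rewrite mul_mx_diag !mxE.
by move=> ui_eq; apply/(mulfI ui_neq0); rewrite ui_eq mulrC.
Qed.

Lemma mulmx_col_orthogonal_diag m (S : 'M[R]_m) (d : 'rV[R]_m) i :
  S^T *m S = 1%:M -> S *m diag_mx d *m S^T *m col i S = d 0 i *: col i S.
Proof.
move=> StS; rewrite -!mulmxA colE (mulmxA S^T) StS mul1mx scalemxAr.
congr (S *m _); apply/matrixP => a b; rewrite mul_diag_mx !mxE.
by case: (eqVneq a i) => [->|] //= _; rewrite !mulr0.
Qed.

Lemma vnorm_col_orthonormal m k (S : 'M[R]_(m, k)) i :
  S^T *m S = 1%:M -> vnorm (col i S) = 1.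
Proof.
move=> StS; rewrite /vnorm (_ : \sum_j _ = 1) ?sqrtr1 //.
have := congr1 (fun M : 'M[R]_k => M i i) StS; rewrite !mxE eqxx mulr1n => <-.
by apply: eq_bigr => j _; rewrite !mxE expr2.
Qed.

Lemma ritz_residual n m (A : 'M[R]_n) (V E : 'M[R]_(n, m)) (T : 'M[R]_m)
    (s : 'cV[R]_m) th :
  A *m V = V *m T + E -> T *m s = th *: s ->
  A *m (V *m s) - th *: (V *m s) = E *m s.
Proof.
by move=> AV Ts; rewrite mulmxA AV mulmxDl -mulmxA Ts -scalemxAr addrAC subrr add0r.
Qed.

End RitzPairs.

Theorem theorem2 (R : realType) (n N : nat) (p : 'I_N -> nat)
  (A : 'M[R]_n)
  (V : 'M[R]_(n, \sum_(j < N) p j))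
  (T : 'M[R]_(\sum_(j < N) p j))
  (E : 'M[R]_(n, \sum_(j < N) p j))
  (S : 'M[R]_(\sum_(j < N) p j))
  (theta : 'I_(\sum_(j < N) p j) -> R)
  (eps1 eps2 : R) :
  A^T = A ->
  T^T = T ->
  block_tridiag T ->
  A *m V = V *m T + E ->
  0 < eps2 ->
  (forall j : 'I_N, mxnorm (@submxrow R N p n E j) <= eps2 * mxnorm A) ->
  S^T *m S = 1%:M ->
  T = S *m diag_mx (\row_i theta i) *m S^T ->
  0 < eps1 ->
  (forall i, vnorm (V *m col i S) < 1 / 2 ->
     exists j, 1 / 2 <= vnorm (V *m col j S) /\
               `|theta i - theta j| <= eps1 * mxnorm A) ->
  forall th : R, eigenvalue T th ->
    exists lambda : R, eigenvalue A lambda /\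
      `|th - lambda| <= 3 * Num.max (Num.sqrt (N%:R) * eps2) eps1 * mxnorm A.
Proof.
move=> A_sym _ _ AV eps2_gt0 E_le S_orth T_diag _ ritz_near th.
rewrite T_diag => /(eigenvalue_orthogonal_diag S_orth) [i ->]; rewrite mxE.
set delta := Num.sqrt N%:R * eps2 * mxnorm A.
have good_ritz j : 1 / 2 <= vnorm (V *m col j S) ->
    exists2 lambda, eigenvalue A lambda & `|theta j - lambda| <= 2 * delta.
  move=> zj_ge; have zj_neq0 : V *m col j S != 0.
    by rewrite -vnorm_eq0 gt_eqF //; apply: lt_le_trans zj_ge; lra.
  have [lambda lambda_eig residual_le] := symmetric_residual_le (theta j) A_sym zj_neq0.
  exists lambda => //.
  have Tcol : T *m col j S = theta j *: col j S.
    by rewrite T_diag mulmx_col_orthogonal_diag // mxE.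
  have := vnorm_mul_blocks_le (col j S) (mulr_ge0 (ltW eps2_gt0) (mxnorm_ge0 A)) E_le.
  rewrite vnorm_col_orthonormal // mulr1 mulrA -/delta -(ritz_residual AV Tcol).
  have := ler_wpM2l (normr_ge0 (theta j - lambda)) zj_ge; lra.
have delta_le : delta <= Num.max (Num.sqrt N%:R * eps2) eps1 * mxnorm A.
  by apply: ler_wpM2r; rewrite ?mxnorm_ge0 // le_max lexx.
have eps1_le : eps1 * mxnorm A <= Num.max (Num.sqrt N%:R * eps2) eps1 * mxnorm A.
  by apply: ler_wpM2r; rewrite ?mxnorm_ge0 // le_max lexx orbT.
have [zi_ge|zi_lt] := lerP (1 / 2) (vnorm (V *m col i S)).
  have [lambda ? ?] := good_ritz i zi_ge; exists lambda; split => //.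
  have := normr_ge0 (theta i - lambda); rewrite -mulrA; lra.
have [j [zj_ge theta_ij]] := ritz_near i zi_lt.
have [lambda ? ?] := good_ritz j zj_ge; exists lambda; split => //.
have := ler_distD (theta j) (theta i) lambda; rewrite -mulrA; lra.
Qed.
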